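(* Let $N\equiv 2\pmod 4$, $q=e^{2\pi i/N}$, $\rho=\sum_{j=1}^n(n-j+\tfrac12)\epsilon_j$, and let $W$ be the group of signed permutations of $\epsilon_1,\dots,\epsilon_n$ (the Weyl group of $osp(1|2n)$) and $\epsilon':W\to\{\pm1\}$ any function. Set $c=\big(\sum_{\lambda\in(\mathbb{Z}/N\mathbb{Z})^n}q^{(\lambda,\lambda+2\rho)}\big)^{-1}$ (well defined by nonvanishing of this sum) and $x_\lambda=c\,q^{-(\lambda,2\rho)}$. For $\lambda,\mu\in\mathbb{Z}^n$ define $$S'_{\lambda,\mu}=\sum_{\sigma\in W}\epsilon'(\sigma)\,q^{2(\lambda+\rho,\sigma(\mu+\rho))},\qquad Q_\mu=\sum_{\sigma\in W}\epsilon'(\sigma)\,q^{2(\rho,\sigma(\mu+\rho))}.$$ Then for every $\mu\in\mathbb{Z}^n$, $$\sum_{\lambda\in(\mathbb{Z}/N\mathbb{Z})^n}x_\lambda\,q^{(\lambda,\lambda+2\rho)}\,S'_{\lambda,\mu}=Q_\mu\,q^{-(\mu,\mu+2\rho)},$$ where the summand is independent of the choice of representative of $\lambda$ modulo $N$.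
   Context: $(\cdot,\cdot)$ is the standard inner product with orthonormal basis $\epsilon_1,\dots,\epsilon_n$. $W$ acts on $\mathbb{R}^n$ by permuting coordinates and changing their signs. $\rho$ is the Weyl vector of $osp(1|2n)$: half the sum of the even positive roots $\epsilon_i\pm\epsilon_j$ $(i<j)$, $2\epsilon_k$, minus half the sum of the odd positive roots $\epsilon_k$. *)

From mathcomp Require Import all_boot all_order all_algebra all_fingroup all_field.
Set Implicit Arguments. Unset Strict Implicit. Unset Printing Implicit Defensive.
Import Order.TTheory GRing.Theory Num.Theory.
Local Open Scope ring_scope.

(* Vectors of Q^n (containing Z^n and the half-integral rho), coordinates
   w.r.t. the orthonormal basis eps_1..eps_n, indexed by 'I_n (i <-> eps_{i+1}). *)
Definition qvec (n : nat) := 'I_n -> rat.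

Definition dot (n : nat) (u v : qvec n) : rat := \sum_(i < n) u i * v i.

Definition vadd (n : nat) (u v : qvec n) : qvec n := fun i => u i + v i.
Definition vscale (n : nat) (a : rat) (u : qvec n) : qvec n := fun i => a * u i.

Definition ivec (n : nat) (l : 'I_n -> int) : qvec n := fun i => (l i)%:~R.

Definition repr_mod (n N : nat) (l : {ffun 'I_n -> 'I_N}) : qvec n :=
  fun i => (nat_of_ord (l i))%:R.

(* rho = sum_{j=1}^n (n - j + 1/2) eps_j ; coordinate i : 'I_n is j = i+1 *)
Definition rho (n : nat) : qvec n :=
  fun i => (n%:R - (i.+1)%:R + 1 / 2%:R).
Arguments rho n : clear implicits.

(* W = signed permutations of eps_1..eps_n: a permutation s together with a
   sign pattern e; (g v)_i = (-1)^(e i) v_(s i). Each pair gives a distinct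
   signed permutation and all arise, so this type is in bijection with W. *)
Definition signed_perm (n : nat) := ({perm 'I_n} * {ffun 'I_n -> bool})%type.

Definition act (n : nat) (g : signed_perm n) (v : qvec n) : qvec n :=
  fun i => (-1) ^+ (g.2 i) * v (g.1 i).

(* zeta = e^{2 pi i/(4N)} = e^{i pi/(2N)}: the (2N)-th root of -1 with minimal
   nonnegative argument (algC's n.-root). q = zeta^4 = e^{2 pi i/N}. *)
Definition zeta (N : nat) : algC := (2 * N)%N.-root (-1).
Definition q (N : nat) : algC := zeta N ^+ 4.

(* q^x for x in (1/4)Z (all exponents occurring below are in (1/2)Z):
   q^x = e^{2 pi i x/N} = zeta^(4x). *)
Definition qpow (N : nat) (x : rat) : algC := zeta N ^ (Num.floor (4%:R * x)).

Definition Gsum (n N : nat) : algC :=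
  \sum_(l : {ffun 'I_n -> 'I_N})
     qpow N (dot (repr_mod l) (vadd (repr_mod l) (vscale 2%:R (rho n)))).

Definition cconst (n N : nat) : algC := (Gsum n N)^-1.

Definition xcoef (n N : nat) (l : qvec n) : algC :=
  cconst n N * qpow N (- dot l (vscale 2%:R (rho n))).

Definition Sprime (n N : nat) (eps' : signed_perm n -> algC) (l m : qvec n) : algC :=
  \sum_(g : signed_perm n)
     eps' g * qpow N (2%:R * dot (vadd l (rho n)) (act g (vadd m (rho n)))).

Definition Qmu (n N : nat) (eps' : signed_perm n -> algC) (m : qvec n) : algC :=
  \sum_(g : signed_perm n)
     eps' g * qpow N (2%:R * dot (rho n) (act g (vadd m (rho n)))).

Arguments Sprime n N eps' l m : clear implicits.
Arguments Qmu n N eps' m : clear implicits.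
Arguments xcoef n N l : clear implicits.

From Pilot Require Import Defs.
From mathcomp Require Import all_boot all_order all_algebra all_fingroup all_field.
From mathcomp Require Import ring zify.
Import Order.TTheory GRing.Theory Num.Theory.
Local Open Scope ring_scope.

(* With nu = sigma(mu + rho), the sum over lambda of
   x_lambda q^((lambda, lambda + 2 rho)) q^(2 (lambda + rho, nu)) factors over the
   coordinates into quadratic Gauss sums G(a) = sum_(x mod N) q^(x (x + 2 a)):
   the i-th factor is q^(2 rho_i nu_i) G(nu_i).  As nu_i - rho_i is an integer,
   completing the square gives G(nu_i) = q^(rho_i^2 - nu_i^2) G(rho_i), and
   prod_i G(rho_i) = c^-1.  What remains is q^((rho, rho) + 2 (rho, nu) - (nu, nu)),
   and (nu, nu) = (mu + rho, mu + rho) since sigma is orthogonal.  The identity is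
   linear in eps'.
   The constant c exists: with b = 2 rho_i odd, G(rho_i) = sum_x q^(x (x + b)) and
   G(rho_i) conj(G(rho_i)) = N sum_(x | q^(2x) = 1) q^(x (x + b)); for N = 2 (mod 4)
   every term of the last sum is 1. *)

Lemma mul4_intM (a b : rat) :
  (2%:R * a) \is a Num.int -> (2%:R * b) \is a Num.int -> (4%:R * (a * b)) \is a Num.int.
Proof.
move=> ha hb; rewrite (_ : 4%:R * (a * b) = (2%:R * a) * (2%:R * b)); first exact: rpredM.
by rewrite mulrACA -natrM.
Qed.

Lemma mul2_nat_int (m : nat) : (2%:R * m%:R : rat) \is a Num.int.
Proof. by rewrite rpredM ?natr_int. Qed.

Lemma mul4_dot_int n (u v : qvec n) :
  (forall i, (2%:R * u i) \is a Num.int) -> (forall i, (2%:R * v i) \is a Num.int) ->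
  (4%:R * dot u v) \is a Num.int.
Proof. by move=> hu hv; rewrite mulr_sumr rpred_sum // => i _; apply: mul4_intM. Qed.

Section QPower.
Variable N : nat.
Hypothesis N_gt0 : (0 < N)%N.

Local Notation qpow := (qpow N).

Lemma zeta_expr4N : zeta N ^+ (4 * N) = 1.
Proof.
have zeta2N : zeta N ^+ (2 * N) = -1 by rewrite /zeta rootCK // muln_gt0.
by rewrite (_ : 4 * N = 2 * N * 2)%N; [rewrite exprM zeta2N sqrrN expr1n | lia].
Qed.

Lemma zeta_neq0 : zeta N != 0.
Proof.
apply: contra_eqN zeta_expr4N => /eqP ->.
by rewrite expr0n muln_eq0 (negbTE (lt0n_neq0 N_gt0)) /= eq_sym oner_eq0.
Qed.

Lemma qpow0 : qpow 0 = 1.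
Proof. by rewrite /Defs.qpow mulr0 floor0 expr0z. Qed.

Lemma qpowD a b : (4%:R * a) \is a Num.int -> qpow (a + b) = qpow a * qpow b.
Proof. by move=> ha; rewrite /Defs.qpow mulrDr floorDzr // expfzDr ?zeta_neq0. Qed.

Lemma qpowMn a k : (4%:R * a) \is a Num.int -> qpow (a * k%:R) = qpow a ^+ k.
Proof.
move=> ha; elim: k => [|k IHk]; first by rewrite mulr0 qpow0 expr0.
by rewrite -addn1 natrD mulrDr mulr1 addrC qpowD // IHk exprD expr1 mulrC.
Qed.

Lemma qpow_sum (I : finType) (F : I -> rat) :
  (forall i, (4%:R * F i) \is a Num.int) -> qpow (\sum_i F i) = \prod_i qpow (F i).
Proof.
move=> hF; pose K x y := (4%:R * x \is a Num.int) /\ qpow x = y.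
suff [] : K (\sum_i F i) (\prod_i qpow (F i)) by [].
apply: big_rec2; first by split; [rewrite mulr0 rpred0 | exact: qpow0].
by move=> i x _ _ [hx <-]; split; [rewrite mulrDr rpredD | exact: qpowD].
Qed.

Lemma qpow_periodic x k : k \is a Num.int -> qpow (x + N%:R * k) = qpow x.
Proof.
move=> /intrP [m ->]; rewrite /Defs.qpow mulrDr addrC floorDzr; last first.
  by rewrite !rpredM ?natr_int ?intr_int.
rewrite expfzDr ?zeta_neq0 //.
have -> : 4%:R * (N%:R * m%:~R) = ((4 * N)%N%:Z * m)%:~R :> rat.
  by rewrite intrM -pmulrn natrM mulrA.
by rewrite intrKfloor -exprz_exp -exprnP zeta_expr4N exp1rz mul1r.
Qed.

Lemma qpow_natN (m : nat) : qpow (N%:R * m%:R) = 1.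
Proof. by rewrite -[_ * _]add0r qpow_periodic ?natr_int ?qpow0. Qed.

Lemma sum_ord_shift (h : int -> algC) : (forall x, h (x + N%:Z) = h x) ->
  forall k, \sum_(x < N) h (x%:Z + k) = \sum_(x < N) h x%:Z.
Proof.
move=> h_per.
have shift1 k : \sum_(x < N) h (x%:Z + (k + 1)) = \sum_(x < N) h (x%:Z + k).
  case: N N_gt0 h_per => // M _ h_per.
  rewrite big_ord_recr big_ord_recl /= [h (0%:Z + k) + _]addrC.
  rewrite (_ : M%:Z + (k + 1) = k + M.+1%:Z); last by rewrite -addn1 PoszD; ring.
  rewrite h_per add0r; congr (_ + _); apply: eq_bigr => i _.
  by congr h; rewrite /bump /= add1n -addn1 PoszD; ring.
have shiftn k (m : nat) : \sum_(x < N) h (x%:Z + (k + m%:Z)) = \sum_(x < N) h (x%:Z + k).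
  by elim: m => [|m IHm]; rewrite ?addr0 // -addn1 PoszD addrA shift1 IHm.
move=> [m|m].
  by rewrite -[Posz m]add0r shiftn; apply: eq_bigr => i _; rewrite addr0.
have := shiftn (Negz m) m.+1; rewrite NegzE addNr => <-.
by apply: eq_bigr => i _; rewrite addr0.
Qed.

Lemma sum_expr_unity (w : algC) : w ^+ N = 1 ->
  \sum_(y < N) w ^+ y = if w == 1 then N%:R else 0.
Proof.
move=> wN; case: eqP => [->|/eqP w1].
  by rewrite (eq_bigr (fun _ => 1)) ?sumr_const ?card_ord // => i _; rewrite expr1n.
have := subrX1 w N; rewrite wN subrr => /esym/eqP.
by rewrite mulf_eq0 subr_eq0 (negbTE w1) => /eqP.
Qed.

Lemma gauss_sum_shift (a k : rat) : (2%:R * a) \is a Num.int -> k \is a Num.int ->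
  \sum_(x < N) qpow ((x%:R + (a + k)) ^+ 2) = \sum_(x < N) qpow ((x%:R + a) ^+ 2).
Proof.
move=> ha /intrP [m ->].
pose h (y : int) := qpow ((y%:~R + a) ^+ 2).
have h_per y : h (y + N%:Z) = h y.
  rewrite /h (_ : _ ^+ 2 = (y%:~R + a) ^+ 2 + N%:R * (2%:R * (y%:~R + a) + N%:R)).
    apply: qpow_periodic.
    by rewrite rpredD ?natr_int // mulrDr rpredD // rpredM ?natr_int ?intr_int.
  by rewrite intrD -pmulrn; ring.
transitivity (\sum_(x < N) h (x%:Z + m)).
  by apply: eq_bigr => i _; rewrite /h; congr qpow; rewrite intrD -pmulrn; ring.
by rewrite sum_ord_shift //; apply: eq_bigr => i _; rewrite /h -pmulrn.
Qed.

(* Completing the square x (x + 2 a) = (x + a)^2 - a^2 and shifting x by the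
   integer a - b. *)
Lemma gauss_sum_complete_square (a b D : rat) :
  (2%:R * a) \is a Num.int -> (a - b) \is a Num.int ->
  \sum_(x < N) qpow (x%:R * (x%:R + 2%:R * a) + D)
  = qpow (D - a ^+ 2 + b ^+ 2) * \sum_(x < N) qpow (x%:R * (x%:R + 2%:R * b)).
Proof.
move=> ha hab.
have hb : (2%:R * b) \is a Num.int.
  have -> : 2%:R * b = 2%:R * a - 2%:R * (a - b) by ring.
  by rewrite rpredB // rpredM ?natr_int.
have square c E (x : nat) : (2%:R * c) \is a Num.int ->
    qpow (x%:R * (x%:R + 2%:R * c) + E) = qpow ((x%:R + c) ^+ 2) * qpow (E - c ^+ 2).
  move=> hc; rewrite -qpowD; first by congr qpow; ring.
  by rewrite expr2 mul4_intM // mulrDr rpredD ?mul2_nat_int.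
under eq_bigr do rewrite square //.
have square_b (x : nat) :
    qpow (x%:R * (x%:R + 2%:R * b)) = qpow ((x%:R + b) ^+ 2) * qpow (0 - b ^+ 2).
  by rewrite -square ?addr0.
under [X in _ = _ * X]eq_bigr do rewrite square_b.
rewrite -!mulr_suml -{1}(subrKC b a) gauss_sum_shift // mulrCA; congr (_ * _).
rewrite mulrC -qpowD; first by congr qpow; ring.
by rewrite add0r mulrN rpredN expr2 mul4_intM.
Qed.

(* For odd x, x (x + b) is a multiple of 2 x; for even x, the order of q^x divides
   2 and, since N = 2 M with M odd, also M. *)
Lemma qpow_quad_eq1 (b x : nat) : odd b -> (N %% 4 = 2)%N ->
  qpow (2%:R * x%:R) = 1 -> qpow (x%:R * (x%:R + b%:R)) = 1.
Proof.
move=> b_odd N_mod4 q2x; have [x_odd|x_even] := boolP (odd x).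
  have -> : x%:R * (x%:R + b%:R) = (2%:R * x%:R) * ((x + b)./2)%:R :> rat.
    rewrite -natrD -!natrM mulnC [in RHS]mulnAC mul2n; congr (_ * _)%:R.
    by rewrite -{1}(odd_double_half (x + b)) oddD x_odd b_odd.
  by rewrite qpowMn ?q2x ?expr1n // mulrA -natrM rpredM ?natr_int.
pose M := (N %/ 4).*2.+1.
have N_2M : N = (2 * M)%N by rewrite {1}(divn_eq N 4) N_mod4 /M -mul2n; lia.
have qx_sq : qpow x%:R ^+ 2 = 1 by rewrite -qpowMn ?rpredM ?natr_int // mulrC.
have qx_M : qpow x%:R ^+ M = 1.
  rewrite -qpowMn ?rpredM ?natr_int // -[x](odd_double_half x) (negbTE x_even) add0n.
  by rewrite -natrM (_ : (_ * M = N * x./2)%N) ?natrM ?qpow_natN // N_2M; lia.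
have qx1 : qpow x%:R = 1.
  by move: qx_M; rewrite /M -addn1 exprD -mul2n exprM qx_sq expr1n mul1r expr1.
by rewrite -natrD qpowMn ?rpredM ?natr_int // qx1 expr1n.
Qed.

(* Substitute x + y for x in the y-th inner sum; the sum over y is then
   geometric in q^(2x). *)
Lemma gauss_sum_norm (b : nat) :
  let f (x : rat) := x * (x + b%:R) in
  (\sum_(x < N) qpow (f x%:R)) * (\sum_(y < N) qpow (- f y%:R))
  = \sum_(x < N) qpow (f x%:R) * (if qpow (2%:R * x%:R) == 1 then N%:R else 0).
Proof.
move=> f; have f_int (x : nat) : (4%:R * f x%:R) \is a Num.int.
  by rewrite /f -natrD -natrM rpredM ?natr_int.
have shift_y (y : nat) : \sum_(x < N) qpow (f x%:R - f y%:R)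
    = \sum_(x < N) qpow (f x%:R) * qpow (2%:R * x%:R) ^+ y.
  pose h (z : int) := qpow (f z%:~R - f y%:R).
  have h_per z : h (z + N%:Z) = h z.
    rewrite /h (_ : _ - _ = f z%:~R - f y%:R + N%:R * (2%:R * z%:~R + N%:R + b%:R)).
      by apply: qpow_periodic; rewrite !rpredD ?rpredM ?natr_int ?intr_int.
    by rewrite /f intrD -pmulrn; ring.
  transitivity (\sum_(x < N) h x%:Z); first by apply: eq_bigr => i _; rewrite /h -pmulrn.
  rewrite -(sum_ord_shift _ h_per y); apply: eq_bigr => x _.
  rewrite -qpowMn ?rpredM ?natr_int // -qpowD // /h intrD -!pmulrn; congr qpow.
  by rewrite /f; ring.
transitivity (\sum_(y < N) \sum_(x < N) qpow (f x%:R - f y%:R)).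
  rewrite mulr_sumr; apply: eq_bigr => y _; rewrite mulr_suml; apply: eq_bigr => x _.
  by rewrite qpowD.
under eq_bigr do rewrite shift_y.
rewrite exchange_big /=; apply: eq_bigr => x _.
rewrite -mulr_sumr sum_expr_unity // -qpowMn ?rpredM ?natr_int //.
by rewrite mulrC -natrM qpow_natN.
Qed.

Lemma gauss_sum_neq0 (b : nat) : odd b -> (N %% 4 = 2)%N ->
  \sum_(x < N) qpow (x%:R * (x%:R + b%:R)) != 0.
Proof.
move=> b_odd N_mod4; set G := \sum_(x < N) _.
suff : G * \sum_(y < N) qpow (- (y%:R * (y%:R + b%:R))) != 0.
  by rewrite mulf_eq0 negb_or => /andP [].
rewrite gauss_sum_norm.
have -> : \sum_(x < N) qpow (x%:R * (x%:R + b%:R))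
            * (if qpow (2%:R * x%:R) == 1 then N%:R else 0)
          = (\sum_(x < N) (if qpow (2%:R * x%:R) == 1%R then N else 0))%:R.
  rewrite natr_sum; apply: eq_bigr => x _.
  by case: ifPn => [/eqP /(qpow_quad_eq1 _ _ b_odd N_mod4) ->|]; rewrite ?mul1r ?mulr0.
rewrite pnatr_eq0 -lt0n (bigD1 (Ordinal N_gt0)) //= mulr0 qpow0 eqxx.
exact: ltn_addr.
Qed.

End QPower.

Definition half_odd (y : rat) := (y - 2%:R^-1) \is a Num.int.

Lemma half_odd_rho n i : half_odd (rho n i).
Proof. by rewrite /half_odd /rho mul1r addrK rpredB ?natr_int. Qed.

Lemma half_odd_addz m y : m \is a Num.int -> half_odd y -> half_odd (m + y).
Proof. by move=> hm hy; rewrite /half_odd -addrA rpredD. Qed.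

Lemma half_odd_sign (s : bool) y : half_odd y -> half_odd ((-1) ^+ s * y).
Proof.
case: s => hy; last by rewrite expr0 mul1r.
rewrite expr1 mulN1r /half_odd (_ : _ - _ = - (y - 2%:R^-1) - 1).
  by rewrite rpredB ?rpredN.
by rewrite [1 in RHS](splitr 1) mul1r; ring.
Qed.

Lemma half_odd_mul2 y : half_odd y -> (2%:R * y) \is a Num.int.
Proof.
move=> hy; rewrite (_ : 2%:R * y = 2%:R * (y - 2%:R^-1) + 1) ?rpredD ?rpredM ?natr_int //.
by rewrite mulrBr mulfV ?subrK.
Qed.

Lemma half_odd_subr y z : half_odd y -> half_odd z -> (y - z) \is a Num.int.
Proof.
by move=> hy hz; rewrite (_ : y - z = (y - 2%:R^-1) - (z - 2%:R^-1)); [rewrite rpredB | ring].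
Qed.

Lemma dot_act n (g : signed_perm n) (v : qvec n) :
  dot (Defs.act g v) (Defs.act g v) = dot v v.
Proof.
rewrite /dot [RHS](reindex_inj (@perm_inj _ g.1)); apply: eq_bigr => i _.
by rewrite /Defs.act mulrACA -expr2 sqrr_sign mul1r.
Qed.

Lemma Gsum_prod n N : (0 < N)%N ->
  Gsum n N = \prod_(i < n) \sum_(x < N) qpow N (x%:R * (x%:R + 2%:R * rho n i)).
Proof.
move=> N_gt0; rewrite bigA_distr_bigA /Gsum; apply: eq_bigr => l _.
rewrite -qpow_sum // => i.
by rewrite mul4_intM ?mul2_nat_int // mulrDr rpredD ?mul2_nat_int // rpredM ?natr_int
   ?half_odd_mul2 ?half_odd_rho.
Qed.

Lemma Gsum_neq0 n N : (N %% 4 = 2)%N -> Gsum n N != 0.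
Proof.
move=> N_mod4; have N_gt0 : (0 < N)%N by case: N N_mod4.
rewrite Gsum_prod //; apply/prodf_neq0 => i _.
have -> : 2%:R * rho n i = (2 * (n - i.+1) + 1)%N%:R.
  by rewrite /rho natrD natrM natrB ?ltn_ord // mul1r mulrDr mulfV //; ring.
by rewrite gauss_sum_neq0 // oddD oddM.
Qed.

Section GaussTransform.
Variables (n N : nat) (nu : qvec n).
Hypothesis N_mod4 : (N %% 4 = 2)%N.
Hypothesis nu_half_odd : forall i, half_odd (nu i).

Let N_gt0 : (0 < N)%N. Proof. by case: N N_mod4. Qed.
Let rho2_int i : (2%:R * rho n i) \is a Num.int. Proof. exact/half_odd_mul2/half_odd_rho. Qed.
Let nu2_int i : (2%:R * nu i) \is a Num.int. Proof. exact/half_odd_mul2. Qed.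
Let rho4_int i : (2%:R * (2%:R * rho n i)) \is a Num.int.
Proof. by rewrite rpredM ?natr_int. Qed.
Let nu4_int i : (2%:R * (2%:R * nu i)) \is a Num.int.
Proof. by rewrite rpredM ?natr_int. Qed.

Lemma gauss_summand_prod (l : {ffun 'I_n -> 'I_N}) :
  xcoef n N (repr_mod l)
    * qpow N (dot (repr_mod l) (vadd (repr_mod l) (vscale 2%:R (rho n))))
    * qpow N (2%:R * dot (vadd (repr_mod l) (rho n)) nu)
  = cconst n N * \prod_i qpow N ((l i)%:R * ((l i)%:R + 2%:R * nu i) + 2%:R * rho n i * nu i).
Proof.
have l2_int i : (2%:R * repr_mod l i) \is a Num.int by exact: mul2_nat_int.
have l_rho_int : (4%:R * dot (repr_mod l) (vscale 2%:R (rho n))) \is a Num.int.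
  by rewrite mul4_dot_int // => i; apply: rho4_int.
have l_l_rho_int : (4%:R * dot (repr_mod l) (vadd (repr_mod l) (vscale 2%:R (rho n))))
    \is a Num.int.
  by rewrite mul4_dot_int // => i; rewrite /vadd /vscale mulrDr rpredD.
rewrite /xcoef -!mulrA; congr (_ * _).
rewrite mulrA -!qpowD ?mulrDr ?mulrN ?rpredD ?rpredN //.
rewrite -qpow_sum // => [|i]; last first.
  rewrite mulrDr; apply: rpredD; apply: mul4_intM => //.
  - exact: mul2_nat_int.
  - by rewrite mulrDr rpredD ?mul2_nat_int.
congr qpow; rewrite /dot /vadd /vscale /repr_mod mulr_sumr -sumrN -!big_split /=.
by apply: eq_bigr => i _; ring.
Qed.

Lemma gauss_transform :
  \sum_(l : {ffun 'I_n -> 'I_N}) xcoef n N (repr_mod l)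
    * qpow N (dot (repr_mod l) (vadd (repr_mod l) (vscale 2%:R (rho n))))
    * qpow N (2%:R * dot (vadd (repr_mod l) (rho n)) nu)
  = qpow N (dot (rho n) (rho n) + 2%:R * dot (rho n) nu - dot nu nu).
Proof.
under eq_bigr do rewrite gauss_summand_prod.
rewrite -mulr_sumr -(bigA_distr_bigA (fun i (x : 'I_N) =>
  qpow N (x%:R * (x%:R + 2%:R * nu i) + 2%:R * rho n i * nu i))) /=.
under eq_bigr => i _ do
  rewrite (@gauss_sum_complete_square N N_gt0 (nu i) (rho n i)) ?half_odd_subr ?half_odd_rho //.
rewrite big_split /= -Gsum_prod // mulrCA /cconst mulVf ?Gsum_neq0 // mulr1.
rewrite -qpow_sum // => [|i]; last first.
  rewrite mulrDr mulrBr; apply: rpredD; first apply: rpredB.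
  - exact: mul4_intM.
  - by rewrite expr2 mul4_intM.
  - by rewrite expr2 mul4_intM.
congr qpow; rewrite /dot mulr_sumr -big_split -sumrB /=.
by apply: eq_bigr => i _; ring.
Qed.

End GaussTransform.

Lemma dot_vadd_self n (u v : qvec n) :
  dot (vadd u v) (vadd u v) = dot v v + dot u (vadd u (vscale 2%:R v)).
Proof. by rewrite /dot -big_split; apply: eq_bigr => i _; rewrite /vadd /vscale /=; ring. Qed.

Theorem mainTheorem7 (n N : nat) (HN : (N %% 4 = 2)%N)
    (eps' : signed_perm n -> algC)
    (Heps : forall g, eps' g = 1 \/ eps' g = -1)
    (mu : 'I_n -> int) :
  Gsum n N != 0 /\
  \sum_(l : {ffun 'I_n -> 'I_N})
     xcoef n N (repr_mod l)
     * qpow N (dot (repr_mod l) (vadd (repr_mod l) (vscale 2%:R (rho n))))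
     * Sprime n N eps' (repr_mod l) (ivec mu)
  = Qmu n N eps' (ivec mu)
    * qpow N (- dot (ivec mu) (vadd (ivec mu) (vscale 2%:R (rho n)))).
Proof.
split; first exact: Gsum_neq0.
rewrite /Sprime /Qmu mulr_suml.
under eq_bigr => l _ do rewrite mulr_sumr.
rewrite exchange_big /=; apply: eq_bigr => g _.
under eq_bigr => l _ do rewrite mulrCA.
rewrite -mulr_sumr -mulrA; congr (_ * _).
set nu := Defs.act g _.
have nu_half_odd i : half_odd (nu i).
  by apply/half_odd_sign/half_odd_addz; [exact: intr_int | exact: half_odd_rho].
have N_gt0 : (0 < N)%N by case: N HN.
rewrite gauss_transform // -qpowD //; last first.
  rewrite mulrCA rpredM ?natr_int // mul4_dot_int // => i.
  - exact/half_odd_mul2/half_odd_rho.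
  - exact: half_odd_mul2.
by rewrite /nu dot_act dot_vadd_self; congr qpow; ring.
Qed.
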